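(* In the stochastic epidemic model described in the context, let $u(k)=K\,I(k)$ for all $k\ge0$ with a constant gain $\delta_{\max}/v_{\min}\le K\le (1-d_{\max})/v_{\max}$. Then for all $k\ge1$, with probability one, $$D(k)\le\begin{cases}\dfrac{d_{\max}I_0\left(1-(\delta_{\max}-Kv_{\min}+1)^k\right)}{Kv_{\min}-\delta_{\max}}, & \delta_{\max}<Kv_{\min},\\[2mm] d_{\max}I_0\,k, & \delta_{\max}=Kv_{\min}.\end{cases}$$
   Context: Time is indexed by days $k=0,1,2,\dots$. Let $(\delta(k))_{k\ge0}$, $(d_I(k))_{k\ge0}$, $(v(k))_{k\ge0}$ be three mutually independent sequences of random variables, each sequence i.i.d. in $k$, with $0\le \delta(k)\le \delta_{\max}$, $0\le d_I(k)\le d_{\max}$ where $d_{\max}<1$, and $0<v_{\min}\le v(k)\le v_{\max}\le 1$. Given a control sequence $u(k)$, the cases evolve by $S(k+1)=S(k)-\delta(k)I(k)$, $I(k+1)=(1+\delta(k))I(k)-v(k)u(k)-d_I(k)I(k)$, $R(k+1)=R(k)+v(k)u(k)$, $D(k+1)=D(k)+d_I(k)I(k)$, with $S(0)=S_0$, $I(0)=I_0>0$, $R(0)=D(0)=0$, $I_0\delta_{\max}<S_0$. *)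

From HB Require Import structures.
From mathcomp Require Import all_boot all_order all_algebra.
From mathcomp Require Import all_classical all_reals all_analysis.
Set Implicit Arguments. Unset Strict Implicit. Unset Printing Implicit Defensive.
Import Order.TTheory GRing.Theory Num.Theory.
Local Open Scope classical_set_scope.
Local Open Scope ring_scope.

Definition mutually_independent d (T : measurableType d) (R : realType)
  (P : probability T R) (I : eqType) (X : I -> {RV P >-> R}) : Prop :=
  forall (J : seq I) (B : I -> set R),
    uniq J -> (forall i, measurable (B i)) ->
    P (\bigcap_(i in [set` J]) (X i @^-1` B i)) =
    (\prod_(i <- J) P (X i @^-1` B i))%E.

Definition identically_distributed d (T : measurableType d) (R : realType)
  (P : probability T R) (X : nat -> {RV P >-> R}) : Prop :=
  forall k (B : set R), measurable B -> P (X k @^-1` B) = P (X 0 @^-1` B).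

Definition join3 (A : Type) (a b c : nat -> A) (i : (nat + nat + nat)%type) : A :=
  match i with inl (inl k) => a k | inl (inr k) => b k | inr k => c k end.

From HB Require Import structures.
From mathcomp Require Import all_boot all_order all_algebra.
From mathcomp Require Import all_classical all_reals all_analysis.
From mathcomp Require Import ring lra.
Set Implicit Arguments.
Unset Strict Implicit.
Unset Printing Implicit Defensive.
Import Order.TTheory GRing.Theory Num.Theory.
Local Open Scope classical_set_scope.
Local Open Scope ring_scope.

(* Under the feedback u = K I the infected count evolves multiplicatively,
   I(k+1) = (1 + delta(k) - K v(k) - d_I(k)) I(k), and the two gain constraints
   put this factor in [0, q] with q = delta_max - K v_min + 1.  Hence
   0 <= I(k) <= I0 q^k on every sample path, and since D grows by at most
   d_max I(k) per day, D(k) <= d_max I0 (q^0 + ... + q^(k-1)); summing the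
   geometric series gives the two cases q < 1 and q = 1. *)

Section GeometricComparison.
Variables (R : realDomainType) (q m : R) (x y c e : nat -> R).
Hypothesis x0_ge0 : 0 <= x 0.
Hypothesis c_ge0 : forall n, 0 <= c n.
Hypothesis c_le : forall n, c n <= q.
Hypothesis x_rec : forall n, x n.+1 = c n * x n.

Lemma mul_recurrence_ge0 n : 0 <= x n.
Proof. by elim: n => // n IH; rewrite x_rec mulr_ge0. Qed.

Lemma mul_recurrence_le_geometric n : x n <= x 0 * q ^+ n.
Proof.
elim: n => [|n IH]; first by rewrite expr0 mulr1.
by rewrite x_rec exprS mulrCA; apply: ler_pM; rewrite ?mul_recurrence_ge0.
Qed.

Hypothesis y0 : y 0 = 0.
Hypothesis e_ge0 : forall n, 0 <= e n.
Hypothesis e_le : forall n, e n <= m.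
Hypothesis y_rec : forall n, y n.+1 = y n + e n * x n.

Lemma add_recurrence_le_geometric_sum n :
  y n <= m * x 0 * \sum_(j < n) q ^+ j.
Proof.
elim: n => [|n IH]; first by rewrite y0 big_ord0 mulr0.
rewrite y_rec big_ord_recr /= mulrDr lerD // -mulrA; apply: ler_pM => //.
- exact: mul_recurrence_ge0.
- exact: mul_recurrence_le_geometric.
Qed.

End GeometricComparison.

Lemma controlled_growth_factor_bounds (R : realFieldType)
    (delta_max d_max v_min v_max K delta di v : R) :
  0 <= delta <= delta_max -> 0 <= di <= d_max -> v_min <= v <= v_max ->
  0 < v_min -> delta_max / v_min <= K -> K <= (1 - d_max) / v_max ->
  0 <= 1 + delta - v * K - di <= delta_max - K * v_min + 1.
Proof.
move=> /andP[delta_ge0 delta_le] /andP[di_ge0 di_le] /andP[v_ge v_le] vmin_gt0.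
move=> K_ge K_le.
have K_ge0 : 0 <= K.
  apply: le_trans K_ge; apply: divr_ge0; last exact: ltW.
  exact: le_trans delta_ge0 delta_le.
have vmax_gt0 : 0 < v_max by apply: lt_le_trans vmin_gt0 (le_trans v_ge v_le).
have Kvmax_le : K * v_max <= 1 - d_max by rewrite -ler_pdivlMr.
have vK_le : v * K <= v_max * K by rewrite ler_wpM2r.
have vK_ge : v_min * K <= v * K by rewrite ler_wpM2r.
apply/andP; split; lra.
Qed.

Theorem lemma8 (d : measure_display) (T : measurableType d) (R : realType)
  (P : probability T R)
  (delta dI v : nat -> {RV P >-> R})
  (delta_max d_max v_min v_max S0 I0 K : R)
  (u S I Rc D : nat -> T -> R) :
  (* each sequence i.i.d., the three sequences mutually independent *)
  mutually_independent (join3 delta dI v) ->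
  identically_distributed delta ->
  identically_distributed dI ->
  identically_distributed v ->
  (* bounds *)
  (forall k w, 0 <= delta k w <= delta_max) ->
  (forall k w, 0 <= dI k w <= d_max) -> d_max < 1 ->
  0 < v_min -> (forall k w, v_min <= v k w <= v_max) -> v_max <= 1 ->
  0 < I0 -> I0 * delta_max < S0 ->
  (* dynamics with feedback control u(k) = K I(k) *)
  (forall k w, u k w = K * I k w) ->
  (forall w, S 0 w = S0 /\ I 0 w = I0 /\ Rc 0 w = 0 /\ D 0 w = 0) ->
  (forall k w,
      S k.+1 w = S k w - delta k w * I k w /\
      I k.+1 w = (1 + delta k w) * I k w - v k w * u k w - dI k w * I k w /\
      Rc k.+1 w = Rc k w + v k w * u k w /\
      D k.+1 w = D k w + dI k w * I k w) ->
  (* gain *)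
  delta_max / v_min <= K -> K <= (1 - d_max) / v_max ->
  forall k : nat, (1 <= k)%N ->
    (delta_max < K * v_min ->
       {ae P, forall w, D k w <=
          d_max * I0 * (1 - (delta_max - K * v_min + 1) ^+ k)
            / (K * v_min - delta_max)}) /\
    (delta_max = K * v_min ->
       {ae P, forall w, D k w <= d_max * I0 * k%:R}).
Proof.
move=> _ _ _ _ delta_bd dI_bd _ vmin_gt0 v_bd _ I0_gt0 _ uE init step K_ge K_le.
move=> k _; set q := delta_max - K * v_min + 1.
have factor_bd n w := controlled_growth_factor_bounds
  (delta_bd n w) (dI_bd n w) (v_bd n w) vmin_gt0 K_ge K_le.
have D_le w : D k w <= d_max * I0 * \sum_(j < k) q ^+ j.
  have [_ [I0E [_ D0E]]] := init w; rewrite -I0E.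
  apply: (@add_recurrence_le_geometric_sum _ _ _ (I^~ w) (D^~ w)
            (fun n => 1 + delta n w - v n w * K - dI n w) (fun n => dI n w)).
  - by rewrite I0E ltW.
  - by move=> n; case/andP: (factor_bd n w).
  - by move=> n; case/andP: (factor_bd n w).
  - by move=> n; have [_ [-> _]] := step n w; rewrite uE; ring.
  - exact: D0E.
  - by move=> n; case/andP: (dI_bd n w).
  - by move=> n; case/andP: (dI_bd n w).
  - by move=> n; have [_ [_ [_ ->]]] := step n w.
split=> [delta_lt|deltaE]; apply: aeW => w.
  have q_neq1 : 1 - q != 0 by rewrite /q; apply/eqP; lra.
  have -> : K * v_min - delta_max = 1 - q by rewrite /q; ring.
  have sumE : \sum_(j < k) q ^+ j = (1 - q ^+ k) / (1 - q).
    by rewrite -opprB subrX1 -mulNr opprB mulrAC divff // mul1r.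
  by rewrite -mulrA -sumE.
have q1 : q = 1 by rewrite /q deltaE; ring.
have := D_le w; rewrite q1.
by under eq_bigr do rewrite expr1n; rewrite sumr_const card_ord.
Qed.
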